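(* Let $X$ be an $n$-dimensional polyhedral normed space and let $Y \subseteq X$ be a $k$-dimensional subspace, $2 \leq k \leq n-1$, which is in general position and satisfies $\lambda(Y, X)>1$. Then every Chalmers–Metcalf operator $T=\sum_{i=1}^{l}\alpha_i x_i \otimes f_i$ for $Y$ is supported on at least $n$ pairs, i.e. $l \geq n$.
   Context: A normed space $X=(\mathbb{R}^n,\|\cdot\|)$ is polyhedral if its unit ball $B_X$ is a convex polytope; write $\mathrm{ext}\, B_X=\{x_1,\dots,x_N\}$ and $\mathrm{ext}\, B_{X^*}=\{f_1,\dots,f_M\}$ for the extreme points of the unit balls of $X$ and $X^*$. Two linear subspaces $Y,Z\subseteq\mathbb{R}^n$ are in general position if $\dim \mathrm{lin}(Y\cup Z)=\min(\dim Y+\dim Z,n)$; a subspace $Y$ is in general position if it is in general position with every subspace $\mathrm{lin}\{x_i : i\in I\}$, $I\subseteq\{1,\dots,N\}$, and every subspace $\bigcap_{i\in I}\ker f_i$, $I\subseteq\{1,\dots,M\}$. A projection onto $Y$ is a linear $P:X\to Y$ with $P|_Y=\mathrm{id}_Y$; $\lambda(Y,X)$ is the infimum of the operator norms of projections and a minimal projection is one of norm $\lambda(Y,X)$. For $x\in X$, $f\in X^*$, $x\otimes f$ is the operator $z\mapsto f(z)x$. A Chalmers–Metcalf operator for $Y$ is an operator $T=\sum_{i=1}^{l}\alpha_i x_i\otimes f_i:X\to X$ with $(x_i,f_i)\in\mathrm{ext}\,B_X\times\mathrm{ext}\,B_{X^*}$, $\alpha_i>0$, $\sum_i\alpha_i=1$,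 $T(Y)\subseteq Y$, and $f_i(P_0(x_i))=\|P_0\|=\lambda(Y,X)$ for all $i$ and some fixed minimal projection $P_0:X\to Y$. *)

(* R : realType, vectors of X = R^n are row vectors 'rV[R]_n,
   linear functionals are also row vectors acting via the dot product,
   linear operators X -> X are matrices acting on the right (x |-> x *m A),
   subspaces are row spaces of matrices (mxalgebra). *)
From HB Require Import structures.
From mathcomp Require Import all_boot all_order all_algebra.
From mathcomp Require Import classical_sets boolp reals.
Set Implicit Arguments. Unset Strict Implicit. Unset Printing Implicit Defensive.
Import Order.TTheory GRing.Theory Num.Theory.
Local Open Scope ring_scope.
Local Open Scope classical_set_scope.

Section PolyDefs.
Variables (R : realType) (n : nat).
Implicit Types (N : 'rV[R]_n -> R) (x y z f : 'rV[R]_n) (A : set 'rV[R]_n).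

Definition fapp f x : R := \sum_(i < n) f 0 i * x 0 i.

Definition is_norm N : Prop :=
  (forall x, N x = 0 -> x = 0) /\
  (forall (a : R) x, N (a *: x) = `|a| * N x) /\
  (forall x y, N (x + y) <= N x + N y).

Definition unit_ball N : set 'rV[R]_n := [set x | N x <= 1].

Definition dual_ball N : set 'rV[R]_n :=
  [set f | forall x, N x <= 1 -> fapp f x <= 1].

Definition conv_hull (s : seq 'rV[R]_n) : set 'rV[R]_n :=
  [set x | exists w : 'I_(size s) -> R,
     (forall i, 0 <= w i) /\ \sum_i w i = 1 /\
     x = \sum_i w i *: s`_i].

Definition polyhedral N : Prop :=
  is_norm N /\ exists s : seq 'rV[R]_n, unit_ball N = conv_hull s.

Definition extreme A x : Prop :=
  A x /\ forall y z (t : R), A y -> A z -> 0 < t < 1 ->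
    x = t *: y + (1 - t) *: z -> y = x /\ z = x.

Definition rows_of (s : seq 'rV[R]_n) : 'M[R]_(size s, n) :=
  \matrix_(i < size s) s`_i.

Definition gen_pos2 m1 m2 (Y : 'M[R]_(m1, n)) (Z : 'M[R]_(m2, n)) : Prop :=
  \rank (Y + Z)%MS = minn (\rank Y + \rank Z) n.

(* Note (rows_of s)^T has columns f_i, so kermx of it is the space of x
   with f_i(x) = 0 for all f_i in s. *)
Definition gen_pos N m (Y : 'M[R]_(m, n)) : Prop :=
  (forall s : seq 'rV[R]_n, (forall v, v \in s -> extreme (unit_ball N) v) ->
     gen_pos2 Y (rows_of s)) /\
  (forall s : seq 'rV[R]_n, (forall v, v \in s -> extreme (dual_ball N) v) ->
     gen_pos2 Y (kermx (rows_of s)^T)).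

Definition is_proj m (Y : 'M[R]_(m, n)) (P : 'M[R]_n) : Prop :=
  (P <= Y)%MS /\ Y *m P = Y.

Definition opnorm N (P : 'M[R]_n) : R :=
  sup [set c | exists x, N x <= 1 /\ c = N (x *m P)].

Definition lambda N m (Y : 'M[R]_(m, n)) : R :=
  inf [set c | exists P, is_proj Y P /\ c = opnorm N P].

Definition minimal_proj N m (Y : 'M[R]_(m, n)) (P : 'M[R]_n) : Prop :=
  is_proj Y P /\ opnorm N P = lambda N Y.

(* the rank-one operator x (x) f : z |-> f(z) x *)
Definition tens x f : 'M[R]_n := f^T *m x.

Definition CM_operator N m (Y : 'M[R]_(m, n)) (l : nat)
    (alpha : 'I_l -> R) (xs fs : 'I_l -> 'rV[R]_n) : Prop :=
  (forall i, extreme (unit_ball N) (xs i)) /\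
  (forall i, extreme (dual_ball N) (fs i)) /\
  (forall i, 0 < alpha i) /\ \sum_i alpha i = 1 /\
  (Y *m (\sum_i alpha i *: tens (xs i) (fs i)) <= Y)%MS /\
  exists P0, minimal_proj N Y P0 /\
    forall i, fapp (fs i) (xs i *m P0) = opnorm N P0.

End PolyDefs.

(* Write T = F^T G, where F has rows f_i and G has rows alpha_i x_i, and let P0
   be the minimal projection.  Since tr (T P0) = lambda(Y, X) > 1 >= tr T, the
   operator T does not map X into Y; since tr (P0 T) <> 0, T does not vanish on
   Y.  As T kills the common kernel K of the f_i and leaves Y invariant, the
   first fact gives Y + K <> X, so by general position Y meets K trivially and
   Y F^T has rank dim Y.  Sylvester's inequality then gives
   rank (Y T) >= dim Y + rank G - l, while Y T lies in Y /\ span {x_i}, whose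
   dimension is dim Y + rank G - n by general position; as Y T <> 0, n <= l. *)

From HB Require Import structures.
From mathcomp Require Import all_boot all_order all_algebra.
From mathcomp Require Import classical_sets boolp reals.
From mathcomp Require Import zify.
Set Implicit Arguments. Unset Strict Implicit. Unset Printing Implicit Defensive.
Import Order.TTheory GRing.Theory Num.Theory.
Local Open Scope ring_scope.

Section RankCounting.
Variable F : fieldType.

Lemma mxrank_cap_minn m1 m2 n (Y : 'M[F]_(m1, n)) (Z : 'M[F]_(m2, n)) :
  \rank (Y + Z)%MS = minn (\rank Y + \rank Z) n ->
  \rank (Y :&: Z)%MS = (\rank Y + \rank Z - n)%N.
Proof. by move=> gen; have := mxrank_sum_cap Y Z; rewrite gen; lia. Qed.

Lemma mxrank_Sylvester m n p (A : 'M[F]_(m, n)) (B : 'M[F]_(n, p)) :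
  (\rank A + \rank B <= n + \rank (A *m B))%N.
Proof. by have := mxrank_Frobenius A 1%:M B; rewrite mulmx1 mul1mx mxrank1. Qed.

Lemma kermx_trS m1 m2 n (A : 'M[F]_(m1, n)) (B : 'M[F]_(m2, n)) :
  (A <= B)%MS -> (kermx B^T <= kermx A^T)%MS.
Proof.
case/submxP=> W ->; apply/sub_kermxP.
by rewrite trmx_mul mulmxA mulmx_ker mul0mx.
Qed.

Lemma eqmx_kermx_tr m1 m2 n (A : 'M[F]_(m1, n)) (B : 'M[F]_(m2, n)) :
  (A :=: B)%MS -> (kermx A^T :=: kermx B^T)%MS.
Proof. by move=> eqAB; apply/eqmxP; rewrite !kermx_trS ?eqAB. Qed.

Lemma scaled_rows_eqmx l n (alpha : 'I_l -> F) (xs : 'I_l -> 'rV[F]_n) :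
  (forall i, alpha i != 0) ->
  (\matrix_(i < l) (alpha i *: xs i) :=: \matrix_(i < l) xs i)%MS.
Proof.
move=> alpha_neq0.
have -> : \matrix_(i < l) (alpha i *: xs i) =
          diag_mx (\row_i alpha i) *m \matrix_(i < l) xs i.
  by apply/matrixP => i j; rewrite mul_diag_mx !mxE.
apply: eqmxMfull; rewrite row_full_unit unitmxE det_diag unitfE.
by apply/prodf_neq0 => i _; rewrite mxE.
Qed.

Lemma row_full_adds_submx k m n (Y : 'M[F]_(k, n)) (K : 'M[F]_(m, n)) (T : 'M[F]_n) :
  row_full (Y + K)%MS -> K *m T = 0 -> stablemx Y T -> (T <= Y)%MS.
Proof.
move=> full KT0 YTY; rewrite -[T]mul1mx.
apply: submx_trans (submxMr T (submx_full _ full)) _.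
by rewrite addsmxMr KT0 addsmx_sub YTY sub0mx.
Qed.

Lemma rank_bound_gen_pos n k l (Y : 'M[F]_(k, n)) (Fs G : 'M[F]_(l, n)) :
  \rank (Y + kermx Fs^T)%MS = minn (\rank Y + \rank (kermx Fs^T)) n ->
  \rank (Y + G)%MS = minn (\rank Y + \rank G) n ->
  stablemx Y (Fs^T *m G) -> ~~ (Fs^T *m G <= Y)%MS ->
  Y *m (Fs^T *m G) != 0 -> (n <= l)%N.
Proof.
set T := Fs^T *m G; set K := kermx Fs^T => genK genG YTY TnY YT0.
have capK : \rank (Y :&: K)%MS = 0%N.
  apply/eqP; rewrite mxrank_cap_minn // subn_eq0 leqNgt.
  apply: contra TnY => big; apply: (row_full_adds_submx (K := K) _ _ YTY).
    by rewrite /row_full genK; apply/eqP; lia.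
  by rewrite /K mulmxA mulmx_ker mul0mx.
have rankYF : \rank (Y *m Fs^T) = \rank Y.
  by have := mxrank_mul_ker Y Fs^T; rewrite -/K capK addn0.
have lower := mxrank_Sylvester (Y *m Fs^T) G.
have upper : (\rank (Y *m T) <= \rank (Y :&: G))%N.
  by rewrite mxrankS // sub_capmx YTY /T mulmxA submxMl.
have pos : (0 < \rank (Y *m T))%N by rewrite lt0n mxrank_eq0.
move: lower upper pos; rewrite rankYF mxrank_cap_minn // /T mulmxA.
by have := rank_leq_row G; have := rank_leq_col G; lia.
Qed.

End RankCounting.

Section RowSpans.
Variables (R : realType) (n : nat).

Lemma mem_rows_of_sub (s : seq 'rV[R]_n) v : v \in s -> (v <= rows_of s)%MS.
Proof.
move=> sv; have lt_vs : (index v s < size s)%N by rewrite index_mem.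
rewrite -(nth_index 0 sv).
by rewrite -(rowK (fun j : 'I_(size s) => s`_j) (Ordinal lt_vs)) row_sub.
Qed.

Lemma rows_of_map_enum l (g : 'I_l -> 'rV[R]_n) :
  (rows_of [seq g i | i <- enum 'I_l] :=: \matrix_(i < l) g i)%MS.
Proof.
apply/eqmxP/andP; split; apply/row_subP => i; rewrite rowK.
  have /mapP[j _ ->] := mem_nth 0 (ltn_ord i).
  by rewrite -(rowK g j) row_sub.
by apply: mem_rows_of_sub; rewrite map_f ?mem_enum.
Qed.

Lemma gen_pos2_eqmx m p q (Y : 'M[R]_(m, n)) (Z : 'M[R]_(p, n)) (Z' : 'M[R]_(q, n)) :
  (Z :=: Z')%MS -> gen_pos2 Y Z -> gen_pos2 Y Z'.
Proof. by move=> eqZ; rewrite /gen_pos2 -eqZ (adds_eqmx (eqmx_refl Y) eqZ). Qed.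

Lemma gen_pos_span N m (Y : 'M[R]_(m, n)) l (xs : 'I_l -> 'rV[R]_n) :
  gen_pos N Y -> (forall i, extreme (unit_ball N) (xs i)) ->
  gen_pos2 Y (\matrix_(i < l) xs i).
Proof.
case=> genX _ ext; apply: gen_pos2_eqmx (rows_of_map_enum xs) _.
by apply: genX => v /mapP[i _ ->]; exact: ext.
Qed.

Lemma gen_pos_common_kernel N m (Y : 'M[R]_(m, n)) l (fs : 'I_l -> 'rV[R]_n) :
  gen_pos N Y -> (forall i, extreme (dual_ball N) (fs i)) ->
  gen_pos2 Y (kermx (\matrix_(i < l) fs i)^T).
Proof.
case=> _ genF ext; apply: gen_pos2_eqmx (eqmx_kermx_tr (rows_of_map_enum fs)) _.
by apply: genF => v /mapP[i _ ->]; exact: ext.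
Qed.

End RowSpans.

Section RankOneOperators.
Variables (R : realType) (n : nat).
Implicit Types (x f : 'rV[R]_n) (A : 'M[R]_n).

Lemma fapp_le1 N x f :
  extreme (unit_ball N) x -> extreme (dual_ball N) f -> fapp f x <= 1.
Proof. by move=> [Bx _] [Bf _]; exact: Bf x Bx. Qed.

Lemma mxtrace_tens_mul x f A : \tr (tens x f *m A) = fapp f (x *m A).
Proof.
rewrite /tens -mulmxA mxtrace_mulC /mxtrace big_ord1 !mxE /fapp.
by apply: eq_bigr => j _; rewrite !mxE mulrC.
Qed.

Variables (l : nat) (alpha : 'I_l -> R) (xs fs : 'I_l -> 'rV[R]_n).

Lemma mxtrace_sum_tens_mul A :
  \tr ((\sum_i alpha i *: tens (xs i) (fs i)) *m A) =
  \sum_i alpha i * fapp (fs i) (xs i *m A).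
Proof.
rewrite mulmx_suml raddf_sum; apply: eq_bigr => i _.
by rewrite /= -scalemxAl mxtraceZ mxtrace_tens_mul.
Qed.

Lemma sum_tens_factor :
  \sum_i alpha i *: tens (xs i) (fs i) =
  (\matrix_(i < l) fs i)^T *m \matrix_(i < l) (alpha i *: xs i).
Proof.
apply/matrixP => a b; rewrite !mxE summxE; apply: eq_bigr => i _.
by rewrite !mxE big_ord1 !mxE mulrCA.
Qed.

End RankOneOperators.

Theorem mainTheorem8 (R : realType) (n : nat) (N : 'rV[R]_n -> R)
    (k : nat) (Y : 'M[R]_(k, n)) :
  polyhedral N ->
  \rank Y = k -> (2 <= k)%N -> (k <= n - 1)%N ->
  gen_pos N Y ->
  1 < lambda N Y ->
  forall (l : nat) (alpha : 'I_l -> R) (xs fs : 'I_l -> 'rV[R]_n),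
    CM_operator N Y alpha xs fs -> (n <= l)%N.
Proof.
move=> _ _ _ _ genY lam_gt1 l alpha xs fs
  [ext_x [ext_f [alpha_gt0 [alpha_sum [stabT [P0 [[[P0Y YP0] P0_min] fxP0]]]]]]].
set T := \sum_i _ in stabT.
have trT : \tr T <= 1.
  rewrite -[T]mulmx1 mxtrace_sum_tens_mul -[X in _ <= X]alpha_sum.
  apply: ler_sum => i _; rewrite mulmx1.
  by apply: ler_piMr; [exact: ltW | exact: fapp_le1].
have trTP0 : \tr (T *m P0) = lambda N Y.
  rewrite mxtrace_sum_tens_mul -P0_min -[RHS]mul1r -alpha_sum mulr_suml.
  by apply: eq_bigr => i _; rewrite fxP0.
have TnY : ~~ (T <= Y)%MS.
  apply/negP => /submxP[W defT]; move: lam_gt1.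
  by rewrite -trTP0 defT -mulmxA YP0 -defT ltNge trT.
have YT0 : Y *m T != 0.
  apply: contraTneq lam_gt1 => YT0; case/submxP: P0Y => W defP0.
  by rewrite -trTP0 mxtrace_mulC defP0 -mulmxA YT0 mulmx0 mxtrace0 ltr10.
rewrite /T sum_tens_factor in stabT TnY YT0.
apply: rank_bound_gen_pos _ _ stabT TnY YT0.
  exact: gen_pos_common_kernel genY ext_f.
have eqG := scaled_rows_eqmx xs (fun i => lt0r_neq0 (alpha_gt0 i)).
exact: gen_pos2_eqmx (eqmx_sym eqG) (gen_pos_span genY ext_x).
Qed.
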